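(* Let $n\ge4$ be even and let $\mathcal{S}_n$ be the regular $n$-gon state space. Then every pair of compatible dichotomic measurements $\mathsf{M}^{(1)},\mathsf{M}^{(2)}$ on $\mathcal{S}_n$ satisfies $\bar P(\mathsf{M}^{(1)},\mathsf{M}^{(2)})\le\frac34$, and there is a compatible pair attaining $\frac34$.
   Context: The regular $n$-gon state space $\mathcal{S}_n\subset\mathbb{R}^3$ is the convex hull of $s_j=(r_n\cos(2j\pi/n),\,r_n\sin(2j\pi/n),\,1)^T$, $j=1,\ldots,n$, with $r_n=\sqrt{\sec(\pi/n)}$. Effects are linear functionals $e$ on $\mathbb{R}^3$ with $0\le e\le1$ on $\mathcal{S}_n$; unit effect $u=(0,0,1)$; $\|f\|=\max_{s\in\mathcal{S}_n}|f(s)|$. A dichotomic measurement is a pair of effects $\mathsf{M}_+,\mathsf{M}_-$ with $\mathsf{M}_++\mathsf{M}_-=u$. Two dichotomic measurements are compatible if there exist effects $\mathsf{J}_{x,y}$, $x,y\in\{+,-\}$, summing to $u$ with $\sum_y\mathsf{J}_{x,y}=\mathsf{M}^{(1)}_x$ and $\sum_x\mathsf{J}_{x,y}=\mathsf{M}^{(2)}_y$. $\bar P(\mathsf{M}^{(1)},\mathsf{M}^{(2)})=\frac18\sum_{x,y\in\{+,-\}}\|\mathsf{M}^{(1)}_x+\mathsf{M}^{(2)}_y\|$. *)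

From HB Require Import structures.
From mathcomp Require Import all_boot all_order all_algebra.
From mathcomp Require Import classical_sets reals trigo.
Set Implicit Arguments. Unset Strict Implicit. Unset Printing Implicit Defensive.
Import Order.TTheory GRing.Theory Num.Theory.
Local Open Scope classical_set_scope.
Local Open Scope ring_scope.

(* vectors of R^3 are row vectors 'rV[R]_3 (coordinates 0,1,2);
   a linear functional on R^3 is represented by its coefficient row vector *)
Definition evalf {R : realType} (f s : 'rV[R]_3) : R := \sum_(i < 3) f 0 i * s 0 i.

Definition rn {R : realType} (n : nat) : R := Num.sqrt ((cos (pi / n%:R))^-1).

Definition vert {R : realType} (n j : nat) : 'rV[R]_3 :=
  \row_(i < 3) (if (i : nat) == 0%N then rn n * cos (2 * j%:R * pi / n%:R)
                else if (i : nat) == 1%N then rn n * sin (2 * j%:R * pi / n%:R)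
                else 1).

Definition stateSpace {R : realType} (n : nat) : set 'rV[R]_3 :=
  [set s | exists lam : 'I_n -> R, (forall j, 0 <= lam j) /\
           \sum_(j < n) lam j = 1 /\ s = \sum_(j < n) lam j *: vert n (j.+1)].

Definition unitE {R : realType} : 'rV[R]_3 :=
  \row_(i < 3) (if (i : nat) == 2%N then 1 else 0).

Definition is_effect {R : realType} (n : nat) (e : 'rV[R]_3) : Prop :=
  forall s, stateSpace n s -> 0 <= evalf e s <= 1.

(* ||f|| = max_{s in S_n} |f(s)| (the max exists; taken as the supremum) *)
Definition fnorm {R : realType} (n : nat) (f : 'rV[R]_3) : R :=
  sup [set `|evalf f s| | s in stateSpace n].

(* a dichotomic measurement: M true = M_+, M false = M_- *)
Definition dichotomic {R : realType} (n : nat) (M : bool -> 'rV[R]_3) : Prop :=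
  is_effect n (M true) /\ is_effect n (M false) /\ M true + M false = unitE.

Definition compatible {R : realType} (n : nat) (M1 M2 : bool -> 'rV[R]_3) : Prop :=
  exists J : bool -> bool -> 'rV[R]_3,
    (forall x y, is_effect n (J x y)) /\
    \sum_(x : bool) \sum_(y : bool) J x y = unitE /\
    (forall x, \sum_(y : bool) J x y = M1 x) /\
    (forall y, \sum_(x : bool) J x y = M2 y).

Definition Pbar {R : realType} (n : nat) (M1 M2 : bool -> 'rV[R]_3) : R :=
  8^-1 * \sum_(x : bool) \sum_(y : bool) fnorm n (M1 x + M2 y).

From Pilot Require Import Defs.
From mathcomp Require Import all_boot all_order all_algebra.
From mathcomp Require Import classical_sets reals trigo.
From mathcomp Require Import ring lra zify.
Set Implicit Arguments.
Unset Strict Implicit.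
Unset Printing Implicit Defensive.

Import Order.TTheory GRing.Theory Num.Theory.
Local Open Scope ring_scope.

(* For even n the polygon is centrally symmetric about c = (0,0,1): every
   vertex s has an antipode s' with s + s' = 2c, so every effect e satisfies
   e(s) <= e(s) + e(s') = 2 e(c) on the whole state space.  If J is a joint
   measurement, then M1_x + M2_y = u + J_xy - J_(-x)(-y), whence
   ||M1_x + M2_y|| <= 1 + 2 J_xy(c); summing over x, y and using
   sum J_xy(c) = u(c) = 1 gives 8 P <= 6.  Equality holds for the measurement
   (e, u - e) jointly measured with itself, where e(s_k) = (1 + cos(2k pi/n))/2
   takes the value 1 at s_n and 0 at s_(n/2): the four norms are 2, 1, 1, 2. *)

Section RegularPolygon.
Variable R : realType.
Implicit Types (n k : nat) (e f g s t : 'rV[R]_3).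

Local Notation u := (@Defs.unitE R).

Lemma evalfDl f g s : evalf (f + g) s = evalf f s + evalf g s.
Proof. by rewrite /evalf -big_split; apply: eq_bigr => i _; rewrite mxE mulrDl. Qed.

Lemma evalfNl f s : evalf (- f) s = - evalf f s.
Proof. by rewrite /evalf -sumrN; apply: eq_bigr => i _; rewrite mxE mulNr. Qed.

Lemma evalfBl f g s : evalf (f - g) s = evalf f s - evalf g s.
Proof. by rewrite evalfDl evalfNl. Qed.

Lemma evalf0l s : evalf 0 s = 0.
Proof. by rewrite /evalf big1 // => i _; rewrite mxE mul0r. Qed.

Lemma evalf0r f : evalf f 0 = 0.
Proof. by rewrite /evalf big1 // => i _; rewrite mxE mulr0. Qed.

Lemma evalfDr f s t : evalf f (s + t) = evalf f s + evalf f t.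
Proof. by rewrite /evalf -big_split; apply: eq_bigr => i _; rewrite mxE mulrDr. Qed.

Lemma evalfZr a f s : evalf f (a *: s) = a * evalf f s.
Proof. by rewrite /evalf mulr_sumr; apply: eq_bigr => i _; rewrite mxE mulrCA. Qed.

Lemma evalf_sumr m f (v : 'I_m -> 'rV[R]_3) :
  evalf f (\sum_(j < m) v j) = \sum_(j < m) evalf f (v j).
Proof. exact: (big_morph _ (evalfDr f) (evalf0r f)). Qed.

Lemma evalf_unitEr f : evalf f u = f 0 ord_max.
Proof.
rewrite /evalf !big_ord_recl big_ord0 !mxE /= !mulr0 mulr1 !add0r addr0.
by congr (f 0 _); apply: val_inj.
Qed.

Lemma evalf_unitEl s : evalf u s = s 0 ord_max.
Proof.
rewrite /evalf !big_ord_recl big_ord0 !mxE /= !mul0r mul1r !add0r addr0.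
by congr (s 0 _); apply: val_inj.
Qed.

Lemma vert_stateSpace n k : (0 < k <= n)%N -> stateSpace n (@vert R n k).
Proof.
case/andP=> k_gt0 k_le_n; have k'_lt_n : (k.-1 < n)%N by rewrite prednK.
set j0 := Ordinal k'_lt_n; exists (fun j => if j == j0 then 1 else 0).
have others (j : 'I_n) : j != j0 -> (if j == j0 then 1 else 0) = 0 :> R.
  by move/negbTE ->.
split; first by move=> j; case: ifP.
split.
  by rewrite (bigD1 j0) //= eqxx big1 ?addr0 // => j /others.
rewrite (bigD1 j0) //= eqxx scale1r prednK // big1 ?addr0 // => j /others ->.
exact: scale0r.
Qed.

Lemma evalf_stateSpace n f s : stateSpace n s ->
  exists lam : 'I_n -> R, [/\ forall j, 0 <= lam j, \sum_(j < n) lam j = 1 &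
    evalf f s = \sum_(j < n) lam j * evalf f (vert n j.+1)].
Proof.
move=> [lam [lam_ge0 [lam_sum ->]]]; exists lam; split => //.
by rewrite evalf_sumr; apply: eq_bigr => j _; rewrite evalfZr.
Qed.

Lemma evalf_stateSpace_le n f b s :
  (forall j : 'I_n, evalf f (vert n j.+1) <= b) -> stateSpace n s -> evalf f s <= b.
Proof.
move=> f_le /(evalf_stateSpace f) [lam [lam_ge0 lam_sum ->]].
rewrite -[b]mul1r -lam_sum mulr_suml; apply: ler_sum => j _; exact: ler_wpM2l.
Qed.

Lemma evalf_unitE_stateSpace n s : stateSpace n s -> evalf u s = 1.
Proof.
move=> /(evalf_stateSpace u) [lam [_ lam_sum ->]].
by rewrite -lam_sum; apply: eq_bigr => j _; rewrite evalf_unitEl mxE mulr1.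
Qed.

Lemma is_effect_vert n e :
  (forall j : 'I_n, 0 <= evalf e (vert n j.+1) <= 1) -> is_effect n e.
Proof.
move=> e_vert s Ss; apply/andP; split; last first.
  by apply: evalf_stateSpace_le Ss => j; case/andP: (e_vert j).
rewrite -oppr_le0 -evalfNl; apply: evalf_stateSpace_le Ss => j.
by rewrite evalfNl oppr_le0; case/andP: (e_vert j).
Qed.

Lemma is_effect0 n : is_effect n (0 : 'rV[R]_3).
Proof. by move=> s _; rewrite evalf0l lexx ler01. Qed.

Lemma is_effect_unitB n e : is_effect n e -> is_effect n (u - e).
Proof.
move=> e_eff s Ss; have /andP[? ?] := e_eff s Ss.
rewrite evalfBl (evalf_unitE_stateSpace Ss); apply/andP; split; lra.
Qed.

Lemma vertD_half n k : (0 < n)%N -> ~~ odd n ->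
  @vert R n k + vert n (k + n./2) = 2 *: u.
Proof.
move=> n_gt0 n_even.
have n_double : (n%:R : R) = 2 * (n./2)%:R.
  by rewrite -[in LHS](even_halfK n_even) -mul2n natrM.
have half_neq0 : ((n./2)%:R : R) != 0.
  by rewrite pnatr_eq0 -lt0n -double_gt0 even_halfK.
have angle : 2 * (k + n./2)%:R * pi / n%:R = 2 * k%:R * pi / n%:R + pi :> R.
  by rewrite natrD n_double; field.
apply/rowP => i; rewrite !mxE angle cosDpi sinDpi.
by case: i => [[|[|[|//]]] ?] /=; ring.
Qed.

Lemma vert_antipode n (j : 'I_n) : ~~ odd n ->
  exists k : 'I_n, @vert R n j.+1 + vert n k.+1 = 2 *: u.
Proof.
move=> n_even; have n_gt0 : (0 < n)%N by apply: leq_ltn_trans (ltn_ord j).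
have n_half := even_halfK n_even.
have j_lt_n := ltn_ord j.
have [j_le_half | half_lt_j] := leqP j.+1 n./2.
  have k_lt_n : (j + n./2 < n)%N by lia.
  by exists (Ordinal k_lt_n); rewrite /= -addSn vertD_half.
have k_lt_n : (j - n./2 < n)%N by lia.
have -> : j.+1 = ((j - n./2).+1 + n./2)%N by lia.
by exists (Ordinal k_lt_n); rewrite addrC vertD_half.
Qed.

Lemma effect_le_center n e s : ~~ odd n -> is_effect n e -> stateSpace n s ->
  evalf e s <= 2 * evalf e u.
Proof.
move=> n_even e_eff; apply: evalf_stateSpace_le => j.
have [k antipodal] := vert_antipode j n_even.
have /andP[ek_ge0 _] := e_eff _ (vert_stateSpace (k := k.+1) (ltn_ord k)).
by rewrite -evalfZr -antipodal evalfDr lerDl.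
Qed.

Lemma fnorm_le n f b : (0 < n)%N ->
  (forall s, stateSpace n s -> `|evalf f s| <= b) -> fnorm n f <= b.
Proof.
move=> n_gt0 f_le; apply: ge_sup; last by move=> _ [s Ss <-]; exact: f_le.
exists `|evalf f (vert n n)|; exists (vert n n) => //.
by apply: vert_stateSpace; rewrite n_gt0 leqnn.
Qed.

Lemma fnorm_attained n f b s0 :
  (forall s, stateSpace n s -> `|evalf f s| <= b) -> stateSpace n s0 ->
  `|evalf f s0| = b -> fnorm n f = b.
Proof.
move=> f_le S_s0 f_s0; apply/le_anti/andP; split.
  apply: ge_sup; last by move=> _ [s Ss <-]; exact: f_le.
  by exists `|evalf f s0|, s0.
rewrite -f_s0; apply: ub_le_sup; last by exists s0.
by exists b => _ [s Ss <-]; exact: f_le.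
Qed.

Lemma fnorm_unitDB_le n e e' : (0 < n)%N -> ~~ odd n ->
  is_effect n e -> is_effect n e' -> fnorm n (u + e - e') <= 1 + 2 * evalf e u.
Proof.
move=> n_gt0 n_even e_eff e'_eff; apply: fnorm_le => // s Ss.
rewrite evalfBl evalfDl (evalf_unitE_stateSpace Ss).
have := effect_le_center n_even e_eff Ss.
have /andP[? ?] := e_eff s Ss; have /andP[? ?] := e'_eff s Ss.
by move=> ?; rewrite ler_norml; apply/andP; split; lra.
Qed.

Lemma Pbar_compatible_le n (M1 M2 : bool -> 'rV[R]_3) : (0 < n)%N -> ~~ odd n ->
  compatible n M1 M2 -> Pbar n M1 M2 <= 3 / 4.
Proof.
move=> n_gt0 n_even [J [J_eff [J_sum [J_M1 J_M2]]]].
have M1DM2 x y : M1 x + M2 y = u + J x y - J (~~ x) (~~ y).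
  rewrite -J_sum -J_M1 -J_M2 !big_bool.
  by case: x; case: y; apply/rowP => i; rewrite !mxE /=; ring.
have fnorm_M1DM2 x y : fnorm n (M1 x + M2 y) <= 1 + 2 * evalf (J x y) u.
  by rewrite M1DM2; apply: fnorm_unitDB_le.
have J_center : \sum_(x : bool) \sum_(y : bool) evalf (J x y) u = 1.
  have := congr1 (evalf^~ u) J_sum.
  by rewrite /= !big_bool /= !evalfDl [evalf u u]evalf_unitEr mxE.
move: J_center (fnorm_M1DM2 true true) (fnorm_M1DM2 true false)
  (fnorm_M1DM2 false true) (fnorm_M1DM2 false false).
rewrite /Pbar !big_bool /=; lra.
Qed.

Definition meas_of e : bool -> 'rV[R]_3 := fun b => if b then e else u - e.

Lemma dichotomic_meas_of n e : is_effect n e -> dichotomic n (meas_of e).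
Proof. by move=> e_eff; split=> //; split; [exact: is_effect_unitB | rewrite addrC subrK]. Qed.

Lemma compatible_meas_of n e : is_effect n e -> compatible n (meas_of e) (meas_of e).
Proof.
move=> e_eff.
exists (fun x y => if x == y then meas_of e x else 0); split.
  by move=> [] [] /=; [| exact: is_effect0 | exact: is_effect0 | exact: is_effect_unitB].
rewrite !big_bool /= !addr0 add0r addrC subrK; split=> //.
by split=> -[]; rewrite big_bool /= ?addr0 ?add0r.
Qed.

Lemma fnorm_effectD_attained n e e' s : is_effect n e -> is_effect n e' ->
  stateSpace n s -> evalf (e + e') s = 2 -> fnorm n (e + e') = 2.
Proof.
move=> e_eff e'_eff Ss ee'_s; apply: (fnorm_attained _ Ss); last first.
  by rewrite ee'_s normr_nat.
move=> t St; have /andP[? ?] := e_eff t St; have /andP[? ?] := e'_eff t St.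
by rewrite evalfDl ler_norml; apply/andP; split; lra.
Qed.

Lemma Pbar_meas_of n e s t : is_effect n e ->
  stateSpace n s -> evalf e s = 1 -> stateSpace n t -> evalf e t = 0 ->
  Pbar n (meas_of e) (meas_of e) = 3 / 4.
Proof.
move=> e_eff Ss e_s St e_t.
have ue_eff := is_effect_unitB e_eff.
have fnorm_ee : fnorm n (e + e) = 2.
  by apply: (fnorm_effectD_attained e_eff e_eff Ss); rewrite evalfDl e_s.
have fnorm_uue : fnorm n ((u - e) + (u - e)) = 2.
  apply: (fnorm_effectD_attained ue_eff ue_eff St).
  by rewrite evalfDl evalfBl (evalf_unitE_stateSpace St) e_t; lra.
have fnorm_u : fnorm n u = 1.
  apply: (fnorm_attained _ Ss); last by rewrite (evalf_unitE_stateSpace Ss) normr1.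
  by move=> r Sr; rewrite (evalf_unitE_stateSpace Sr) normr1.
rewrite /Pbar !big_bool /= fnorm_ee fnorm_uue subrK (addrC e) subrK.
by rewrite fnorm_u; lra.
Qed.

Lemma rn_gt0 n : (2 < n)%N -> 0 < @rn R n.
Proof.
move=> n_gt2; rewrite /rn sqrtr_gt0 invr_gt0; apply: cos_gt0_pihalf.
have n_gt2R : 2 < (n%:R : R) by rewrite (ltr_nat R 2 n).
have pi_gt0 := pi_gt0 R.
apply/andP; split.
  by apply: (@lt_le_trans _ _ 0); [lra | apply: divr_ge0; lra].
by rewrite ltr_pdivrMr; [nra | lra].
Qed.

Definition cos_effect n : 'rV[R]_3 :=
  \row_(i < 3) (if (i : nat) == 0%N then (2 * rn n)^-1
                else if (i : nat) == 1%N then 0 else 2^-1).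

Lemma evalf_cos_effect_vert n k : (2 < n)%N ->
  evalf (cos_effect n) (vert n k) = (1 + cos (2 * k%:R * pi / n%:R)) / 2.
Proof.
move=> n_gt2; rewrite /evalf !big_ord_recl big_ord0 !mxE /=.
by field; rewrite gt_eqF // rn_gt0.
Qed.

Lemma is_effect_cos_effect n : (2 < n)%N -> is_effect n (cos_effect n).
Proof.
move=> n_gt2; apply: is_effect_vert => j; rewrite evalf_cos_effect_vert //.
have := cos_geN1 (2 * j.+1%:R * pi / n%:R : R).
have := cos_le1 (2 * j.+1%:R * pi / n%:R : R).
by move=> ? ?; apply/andP; split; lra.
Qed.

Lemma cos_effect_top n : (2 < n)%N -> evalf (cos_effect n) (vert n n) = 1.
Proof.
move=> n_gt2; have n_neq0 : (n%:R : R) != 0 by rewrite pnatr_eq0; lia.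
have two_pi : 2 * n%:R * pi / n%:R = pi *+ 2 :> R by rewrite mulr2n; field.
by rewrite evalf_cos_effect_vert // two_pi cos2pi; lra.
Qed.

Lemma cos_effect_bottom n : (2 < n)%N -> ~~ odd n ->
  evalf (cos_effect n) (vert n n./2) = 0.
Proof.
move=> n_gt2 n_even; have n_neq0 : (n%:R : R) != 0 by rewrite pnatr_eq0; lia.
have half_turn : 2 * (n./2)%:R * pi / n%:R = pi :> R.
  by rewrite -natrM mul2n even_halfK //; field.
by rewrite evalf_cos_effect_vert // half_turn cospi addrN mul0r.
Qed.

End RegularPolygon.

Theorem mainTheorem12 (R : realType) (n : nat) :
  (4 <= n)%N -> ~~ odd n ->
  (forall M1 M2 : bool -> 'rV[R]_3,
      dichotomic n M1 -> dichotomic n M2 -> compatible n M1 M2 ->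
      Pbar n M1 M2 <= 3 / 4) /\
  (exists M1 M2 : bool -> 'rV[R]_3,
      dichotomic n M1 /\ dichotomic n M2 /\ compatible n M1 M2 /\
      Pbar n M1 M2 = 3 / 4).
Proof.
move=> n_ge4 n_even; have n_gt2 : (2 < n)%N by lia.
split; first by move=> M1 M2 _ _; apply: Pbar_compatible_le; lia.
have e_eff : is_effect n (cos_effect R n) := is_effect_cos_effect n_gt2.
exists (meas_of (cos_effect R n)), (meas_of (cos_effect R n)).
do 2 (split; first exact: dichotomic_meas_of).
split; first exact: compatible_meas_of.
apply: (Pbar_meas_of (s := vert n n) (t := vert n n./2) e_eff).
- by apply: vert_stateSpace; lia.
- exact: cos_effect_top.
- by apply: vert_stateSpace; lia.
- exact: cos_effect_bottom.
Qed.
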